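(* Let $k\colon K\to T1$ be an $n$-globular operad equipped with a contraction and a system of compositions. Then $k$ has a section $\hat k\colon T1\to K$ in $\mathbf{GSet}_n$ (i.e. $k\circ\hat k=\mathrm{id}_{T1}$); in particular $k_m\colon K_m\to(T1)_m$ is surjective for every $0\le m\le n$.
   Context: Fix $n\in\mathbb{N}$. An $n$-globular set $X$ consists of sets $X_0,\dots,X_n$ and functions $s,t\colon X_m\to X_{m-1}$ ($1\le m\le n$) with $s\circ s=s\circ t$ and $t\circ s=t\circ t$; maps commute with $s,t$; $\mathbf{GSet}_n$ is the resulting category. Two $m$-cells are parallel if they have the same source and target. $T$ denotes the free strict $n$-category monad on $\mathbf{GSet}_n$, with unit $\eta^T$ and multiplication $\mu^T$. $1$ denotes the terminal $n$-globular set and $!$ any map to $1$; $T1$ is the free strict $n$-category on $1$; $\mathrm{id}_\alpha$ is the identity cell on $\alpha$. An $n$-globular collection is a map $k\colon K\to T1$ in $\mathbf{GSet}_n$; a map of collections is a map over $T1$. The tensor $K\otimes K'$ of collections $k\colon K\to T1$, $k'\colon K'\to T1$ is the pullback of $k$ along $T!\colon TK'\to T1$, regarded as a collection via $K\otimes K'\to TK'\xrightarrow{Tk'}T^21\xrightarrow{\mu^T_1}T1$; the unit is $\eta^T_1\colon1\to T1$. An $n$-globular operad is a monoid $(K,\eta^K,\mu^K)$ in this monoidal category of collections. Contractions: for a collection $k\colon K\to T1$ and $x\in(T1)_m$ put $K(x)=\{a\in K_m: k(a)=x\}$. For $1\le m\le n$ and $\pi\in(T1)_m$ let $C_K(\pi)=K(s\pi)\times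 K(t\pi)$ if $m=1$, and $C_K(\pi)=\{(a,b)\in K(s\pi)\times K(t\pi): s(a)=s(b),\ t(a)=t(b)\}$ if $m>1$. A contraction $\gamma$ on $K$ consists of, for each $1\le m\le n$ and each $\alpha\in(T1)_{m-1}$, a function $\gamma_{\mathrm{id}_\alpha}\colon C_K(\mathrm{id}_\alpha)\to K(\mathrm{id}_\alpha)$ with $s\gamma_{\mathrm{id}_\alpha}(a,b)=a$ and $t\gamma_{\mathrm{id}_\alpha}(a,b)=b$, such that moreover (tameness) any two parallel $n$-cells $a,b$ of $K$ with $k(a)=k(b)$ are equal. Systems of compositions: for $0\le m\le n$ let $\eta_m\in(T1)_m$ be the image under $\eta^T_1$ of the unique $m$-cell of $1$; put $\beta^m_m=\eta_m$ and $\beta^m_p=\eta_m\circ^m_p\eta_m$ for $0\le p<m$. Let $S\subseteq T1$ be the sub-$n$-globular set with $S_m=\{\beta^m_p:0\le p\le m\}$, a collection via the inclusion, with $\eta^S\colon1\to S$ picking out each $\beta^m_m$. A system of compositions on an operad $K$ is a map of collections $\sigma\colon S\to K$ with $\sigma\circ\eta^S=\eta^K$. *)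

From Stdlib Require Import List Arith.
Import ListNotations.

(* n-globular sets, encoded as an ambient carrier type together with a
   predicate singling out the actual cells, a dimension function and
   source/target functions (meaningful on cells of positive dimension).
   The set X_m of the paper is {x | gin x /\ gdim x = m}. *)
Record gset := GSet {
  gcar :> Type;
  gin  : gcar -> Prop;
  gdim : gcar -> nat;
  gsrc : gcar -> gcar;
  gtgt : gcar -> gcar }.

Arguments gin {g} _.
Arguments gdim {g} _.
Arguments gsrc {g} _.
Arguments gtgt {g} _.

Definition is_gset (n : nat) (X : gset) : Prop :=
  (forall x : X, gin x -> gdim x <= n) /\
  (forall x : X, gin x -> 0 < gdim x ->
      gin (gsrc x) /\ gin (gtgt x) /\
      gdim (gsrc x) = pred (gdim x) /\ gdim (gtgt x) = pred (gdim x)) /\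
  (forall x : X, gin x -> 1 < gdim x ->
      gsrc (gsrc x) = gsrc (gtgt x) /\ gtgt (gsrc x) = gtgt (gtgt x)).

Definition is_gmap (X Y : gset) (f : X -> Y) : Prop :=
  forall x : X, gin x ->
    gin (f x) /\ gdim (f x) = gdim x /\
    (0 < gdim x -> f (gsrc x) = gsrc (f x) /\ f (gtgt x) = gtgt (f x)).

Definition parallel (X : gset) (x y : X) : Prop :=
  gdim x = gdim y /\ (0 < gdim x -> gsrc x = gsrc y /\ gtgt x = gtgt y).

Definition one (n : nat) : gset :=
  {| gcar := nat; gin := fun m => m <= n; gdim := fun m => m;
     gsrc := pred; gtgt := pred |}.

(* A cell of relative dimension m+1 of the
   free strict category on a globular set, living in a hom at offset j, is
   a sequence  x0 -c1-> x1 -c2-> ... -ck-> xk  where the x_i are j-cells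
   of X and the c_i are cells of relative dimension m in the free strict
   category on the hom globular sets X(x_(i-1), x_i) (offset j+1).  This is
   the standard description T X (x,y) = coproduct over sequences of products
   of T'(X(x_(i-1),x_i)) of the free strict n-category. *)
Inductive rt (A : Type) : Type :=
| Lf : A -> rt A
| Nd : A -> list (rt A * A) -> rt A.
Arguments Lf {A} _.
Arguments Nd {A} _ _.

Section Raw.
Variable X : gset.

Definition inhom (c : rt X) (x y : X) : Prop :=
  match c with
  | Lf b => gsrc b = x /\ gtgt b = y
  | Nd b0 l => (gsrc b0 = x /\ gtgt b0 = y) /\
               Forall (fun p => gsrc (snd p) = x /\ gtgt (snd p) = y) l
  end.

Fixpoint wf (j m : nat) (r : rt X) {struct r} : Prop :=
  match r with
  | Lf a => m = 0 /\ gin a /\ gdim a = j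
  | Nd a0 l =>
      match m with
      | 0 => False
      | S m' =>
          gin a0 /\ gdim a0 = j /\
          (fix wfl (prev : X) (l : list (rt X * X)) : Prop :=
             match l with
             | [] => True
             | (c, x) :: l' =>
                 gin x /\ gdim x = j /\ wf (S j) m' c /\ inhom c prev x /\
                 wfl x l'
             end) a0 l
      end
  end.

End Raw.

Section RawGen.
Variable A : Type.
Fixpoint rsrc (m : nat) (r : rt A) {struct r} : rt A :=
  match r with
  | Lf a => Lf a
  | Nd a0 l =>
      match m with
      | 0 | 1 => Lf a0
      | S m' => Nd a0 (map (fun '(c, x) => (rsrc m' c, x)) l)
      end
  end.

Fixpoint rtgt (m : nat) (r : rt A) {struct r} : rt A :=
  match r with
  | Lf a => Lf a
  | Nd a0 l =>
      match m with
      | 0 | 1 => Lf (last (map snd l) a0)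
      | S m' => Nd a0 (map (fun '(c, x) => (rtgt m' c, x)) l)
      end
  end.

Fixpoint rid (r : rt A) : rt A :=
  match r with
  | Lf a => Nd a []
  | Nd a0 l => Nd a0 (map (fun '(c, x) => (rid c, x)) l)
  end.

(* composition r o_p r' along the p-dimensional boundary (r first) *)
Fixpoint rcomp (p : nat) (r r' : rt A) {struct r} : rt A :=
  match r, r' with
  | Nd a0 l, Nd _ l' =>
      match p with
      | 0 => Nd a0 (l ++ l')
      | S p' =>
          Nd a0 ((fix go (l1 l2 : list (rt A * A)) : list (rt A * A) :=
                    match l1, l2 with
                    | (c, x) :: l1', (c', _) :: l2' => (rcomp p' c c', x) :: go l1' l2'
                    | _, _ => []
                    end) l l')
      end
  | _, _ => r
  end.

End RawGen.

Section RawEta.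
Variable X : gset.
Fixpoint reta (m : nat) (x : X) : rt X :=
  match m with
  | 0 => Lf x
  | S m' => Nd (Nat.iter m gsrc x) [(reta m' x, Nat.iter m gtgt x)]
  end.
End RawEta.

Arguments inhom {X} _ _ _.
Arguments wf {X} _ _ _.
Arguments rsrc {A} _ _.
Arguments rtgt {A} _ _.
Arguments rid {A} _.
Arguments rcomp {A} _ _ _.
Arguments reta {X} _ _.

Fixpoint rmap {A B : Type} (f : A -> B) (r : rt A) : rt B :=
  match r with
  | Lf a => Lf (f a)
  | Nd a0 l => Nd (f a0) (map (fun '(c, x) => (rmap f c, f x)) l)
  end.

Definition T (n : nat) (X : gset) : gset :=
  {| gcar := (nat * rt X)%type;
     gin := fun p => fst p <= n /\ wf 0 (fst p) (snd p);
     gdim := fun p => fst p;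
     gsrc := fun p => (pred (fst p), rsrc (fst p) (snd p));
     gtgt := fun p => (pred (fst p), rtgt (fst p) (snd p)) |}.

Definition Tmap (n : nat) (X Y : gset) (f : X -> Y) : T n X -> T n Y :=
  fun p => (fst p, rmap f (snd p)).

Definition etaT (n : nat) (X : gset) : X -> T n X :=
  fun x => (gdim x, reta (gdim x) x).

Fixpoint rflat {A : Type} (j m : nat) (R : rt (nat * rt A)) {struct R} : rt A :=
  match R with
  | Lf u => snd u
  | Nd u0 l =>
      match map (fun '(c, _) => rflat (S j) (pred m) c) l with
      | [] => Nat.iter m rid (snd u0)
      | c1 :: cs => fold_left (rcomp j) cs c1
      end
  end.

Definition muT (n : nat) (X : gset) : T n (T n X) -> T n X :=
  fun p => (fst p, rflat 0 (fst p) (snd p)).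

Definition idT (n : nat) (X : gset) (p : T n X) : T n X :=
  (S (fst p), rid (snd p)).
Definition compT (n : nat) (X : gset) (q : nat) (p p' : T n X) : T n X :=
  (fst p, rcomp q (snd p) (snd p')).

Definition T1 (n : nat) : gset := T n (one n).

Definition bang (X : gset) : X -> nat := fun x => gdim x.

(* Collections and their tensor.  K (x) K' is the pullback of
   k : K -> T1 along T! : T K' -> T1; its structure map is
   mu^T_1 o T k' o pr2 (see [tensor_map]). *)
Definition tensor (n : nat) (K : gset) (k : K -> T1 n) (K' : gset) : gset :=
  {| gcar := (gcar K * gcar (T n K'))%type;
     gin := fun ab => gin (fst ab) /\ gin (snd ab) /\
                      k (fst ab) = Tmap n K' (one n) (bang K') (snd ab);
     gdim := fun ab => gdim (fst ab);
     gsrc := fun ab => (gsrc (fst ab), gsrc (snd ab));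
     gtgt := fun ab => (gtgt (fst ab), gtgt (snd ab)) |}.

Definition tensor_map (n : nat) (K : gset) (k : K -> T1 n) (K' : gset)
  (k' : K' -> T1 n) : tensor n K k K' -> T1 n :=
  fun ab => muT n (one n) (Tmap n K' (T1 n) k' (snd ab)).

Definition is_operad (n : nat) (K : gset) (k : K -> T1 n)
  (etaK : one n -> K) (muK : tensor n K k K -> K) : Prop :=
  is_gset n K /\ is_gmap K (T1 n) k /\
  is_gmap (one n) K etaK /\
  (forall m : one n, gin m -> k (etaK m) = etaT n (one n) m) /\
  is_gmap (tensor n K k K) K muK /\
  (forall ab : tensor n K k K, gin ab -> k (muK ab) = tensor_map n K k K k ab) /\
  (forall a : K, gin a -> muK (etaK (gdim a), etaT n K a) = a) /\
  (forall a : K, gin a -> muK (a, Tmap n (one n) K etaK (k a)) = a) /\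
  (* associativity  mu o (id (x) mu) = mu o (mu (x) id) o alpha, where the
     associator alpha : K (x) (K (x) K) -> (K (x) K) (x) K sends (a, D) to
     ((a, T pr1 D), mu^T_K (T pr2 D)) *)
  (forall aD : tensor n K k (tensor n K k K), gin aD ->
     muK (fst aD, Tmap n (tensor n K k K) K muK (snd aD)) =
     muK (muK (fst aD, Tmap n (tensor n K k K) K fst (snd aD)),
          muT n K (Tmap n (tensor n K k K) (T n K) snd (snd aD)))).

(* Contractions: gamma alpha a b = gamma_{id_alpha}(a, b). *)
Definition is_contraction (n : nat) (K : gset) (k : K -> T1 n)
  (gamma : T1 n -> K -> K -> K) : Prop :=
  (forall (alpha : T1 n), gin alpha -> gdim alpha < n ->
     forall a b : K, gin a -> gin b ->
       k a = gsrc (idT n (one n) alpha) -> k b = gtgt (idT n (one n) alpha) ->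
       (0 < gdim alpha -> gsrc a = gsrc b /\ gtgt a = gtgt b) ->
       gin (gamma alpha a b) /\ k (gamma alpha a b) = idT n (one n) alpha /\
       gsrc (gamma alpha a b) = a /\ gtgt (gamma alpha a b) = b) /\
  (forall a b : K, gin a -> gin b -> gdim a = n -> gdim b = n ->
     parallel K a b -> k a = k b -> a = b).

Definition etaT1 (n m : nat) : T1 n := etaT n (one n) m.

Definition beta (n m p : nat) : T1 n :=
  if Nat.eqb p m then etaT1 n m
  else compT n (one n) p (etaT1 n m) (etaT1 n m).

Definition inS (n : nat) (c : T1 n) : Prop :=
  exists m p, m <= n /\ p <= m /\ c = beta n m p.

(* sigma : S -> K is a map of collections with sigma o eta^S = eta^K
   (sigma is given as a function on T1 of which only the restriction to
   S matters) *)
Definition is_syscomp (n : nat) (K : gset) (k : K -> T1 n)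
  (etaK : one n -> K) (sigma : T1 n -> K) : Prop :=
  (forall c, inS n c ->
     gin (sigma c) /\ gdim (sigma c) = gdim c /\ k (sigma c) = c /\
     (0 < gdim c -> sigma (gsrc c) = gsrc (sigma c) /\
                    sigma (gtgt c) = gtgt (sigma c))) /\
  (forall m, m <= n -> sigma (etaT1 n m) = etaK m).

(* A pasting diagram of T1 is built from units by identities, whiskering and
   binary composites along lower-dimensional boundaries, so a section of k can
   be defined by recursion on the diagram.  Units go to the units of K,
   identities to the cells supplied by the contraction, and a composite along
   p of two cells lifted over the unit p-cell goes to mu^K applied to the
   chosen composition operation sigma(beta) and the diagram of the two lifted
   cells.  The operad axioms for mu^K make k send it to the composite in T1,
   sigma being a map of globular sets makes it commute with source and target,
   and the unit law identifies its lowest boundary with the unit. *)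
From Pilot Require Import Defs.
From Stdlib Require Import List Arith Lia.
Import ListNotations.

(* [r] under [c] nested singleton nodes: a diagram at offset [i + c] seen at
   offset [i]. *)
Fixpoint rnest {A : Type} (f : nat -> A) (i c : nat) (r : rt A) {struct c} : rt A :=
  match c with
  | 0 => r
  | S c' => Nd (f i) [(rnest f (S i) c' r, f i)]
  end.

Section Nest.
Variable A : Type.
Implicit Types (f : nat -> A) (r : rt A).

Lemma rmap_rnest {B : Type} (h : A -> B) f c : forall i r,
  rmap h (rnest f i c r) = rnest (fun q => h (f q)) i c (rmap h r).
Proof. induction c; intros; simpl; try rewrite IHc; auto. Qed.

Lemma rnest_ext f f' c : forall i r,
  (forall q, q < i + c -> f q = f' q) -> rnest f i c r = rnest f' i c r.
Proof.
  induction c; intros i r Hf; simpl; auto.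
  rewrite Hf by lia. rewrite IHc by (intros; apply Hf; lia). reflexivity.
Qed.

Lemma rnest_add f a : forall b i r,
  rnest f i (a + b) r = rnest f i a (rnest f (i + a) b r).
Proof.
  induction a; intros; simpl; [rewrite Nat.add_0_r; reflexivity|].
  rewrite IHa, Nat.add_succ_r. reflexivity.
Qed.

Lemma rnest_S f c i r :
  rnest f i (S c) r = rnest f i c (Nd (f (i + c)) [(r, f (i + c))]).
Proof. rewrite <- Nat.add_1_r, rnest_add. reflexivity. Qed.

Lemma rcomp_rnest f c : forall i r r',
  rcomp c (rnest f i c r) (rnest f i c r') = rnest f i c (rcomp 0 r r').
Proof. induction c; intros; simpl; try rewrite IHc; reflexivity. Qed.

Lemma rid_rnest f c : forall i r, rid (rnest f i c r) = rnest f i c (rid r).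
Proof. induction c; intros; simpl; try rewrite IHc; reflexivity. Qed.

Lemma rsrc_rnest f c : forall i m r, 0 < m ->
  rsrc (c + m) (rnest f i c r) = rnest f i c (rsrc m r).
Proof.
  induction c; intros i m r Hm; simpl; [reflexivity|].
  destruct (c + m) eqn:E; [lia|]. simpl. rewrite <- E, IHc; auto.
Qed.

Lemma rtgt_rnest f c : forall i m r, 0 < m ->
  rtgt (c + m) (rnest f i c r) = rnest f i c (rtgt m r).
Proof.
  induction c; intros i m r Hm; simpl; [reflexivity|].
  destruct (c + m) eqn:E; [lia|]. simpl. rewrite <- E, IHc; auto.
Qed.

Lemma rsrc_rnest_Lf f c i a :
  rsrc (S c) (rnest f i (S c) (Lf a)) = rnest f i c (Lf (f (i + c))).
Proof. rewrite rnest_S, <- Nat.add_1_r, rsrc_rnest by lia. reflexivity. Qed.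

Lemma rtgt_rnest_Lf f c i a :
  rtgt (S c) (rnest f i (S c) (Lf a)) = rnest f i c (Lf (f (i + c))).
Proof. rewrite rnest_S, <- Nat.add_1_r, rtgt_rnest by lia. reflexivity. Qed.

End Nest.

(* A node with a single child flattens to the flattening of that child. *)
Lemma rflat_rnest {A : Type} (f : nat -> nat * rt A) c : forall i m R,
  rflat i (c + m) (rnest f i c R) = rflat (i + c) m R.
Proof.
  induction c; intros; simpl; [rewrite Nat.add_0_r; reflexivity|].
  rewrite IHc, <- Nat.add_succ_comm. reflexivity.
Qed.

Lemma rflat_rmap_reta {A : Type} (X : gset) (h : X -> nat * rt A) c : forall j x,
  rflat j c (rmap h (reta c x)) = snd (h x).
Proof. induction c; intros; simpl; auto. Qed.

Lemma wf_rnest (X : gset) (f : nat -> X) c : forall i m r,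
  (forall q, q < i + c -> gin (f q) /\ gdim (f q) = q) ->
  (forall q, S q < i + c -> gsrc (f (S q)) = f q /\ gtgt (f (S q)) = f q) ->
  wf (i + c) m r ->
  (0 < c -> inhom r (f (pred (i + c))) (f (pred (i + c)))) ->
  wf i (c + m) (rnest f i c r).
Proof.
  induction c; intros i m r Hf Hbd Hr Hhom.
  - rewrite Nat.add_0_r in Hr; exact Hr.
  - simpl. destruct (Hf i) as [Hi Hdi]; [lia|].
    rewrite <- Nat.add_succ_comm in Hr, Hhom.
    repeat split; auto.
    + apply IHc; auto; intros; first [apply Hf | apply Hbd | apply Hhom]; lia.
    + destruct c; simpl.
      * rewrite Nat.add_0_r in Hhom. apply Hhom; lia.
      * destruct (Hbd i) as [E1 E2]; [lia|].
        repeat split; auto; repeat constructor; simpl; auto.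
Qed.

Fixpoint rt_ind_deep (A : Type) (P : rt A -> Prop) (HL : forall a, P (Lf a))
  (HN : forall a l, Forall (fun pr => P (fst pr)) l -> P (Nd a l)) (r : rt A) : P r :=
  match r with
  | Lf a => HL a
  | Nd a l => HN a l ((fix F (l : list (rt A * A)) : Forall (fun pr => P (fst pr)) l :=
        match l with
        | [] => Forall_nil _
        | (c, x) :: l' =>
            @Forall_cons _ (fun pr => P (fst pr)) (c, x) l' (rt_ind_deep A P HL HN c) (F l')
        end) l)
  end.

Section Globular.
Variables (n : nat) (X : gset).
Hypothesis HX : is_gset n X.

Lemma iter_boundary_in c : forall x : X, gin x -> c <= gdim x ->
  gin (Nat.iter c gsrc x) /\ gdim (Nat.iter c gsrc x) = gdim x - c /\
  gin (Nat.iter c gtgt x) /\ gdim (Nat.iter c gtgt x) = gdim x - c.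
Proof.
  destruct HX as (_ & Hbd & _).
  induction c; intros x Hx Hd; simpl; [rewrite Nat.sub_0_r; auto|].
  destruct (IHc x Hx) as (Hs & Hds & Ht & Hdt); [lia|].
  destruct (Hbd _ Hs) as (Hs' & _ & Hds' & _); [lia|].
  destruct (Hbd _ Ht) as (_ & Ht' & _ & Hdt'); [lia|].
  repeat split; auto; lia.
Qed.

Lemma iter_tgt_src c : forall x : X, gin x -> 1 <= c -> S c <= gdim x ->
  Nat.iter c gtgt (gsrc x) = Nat.iter (S c) gtgt x /\
  Nat.iter c gsrc (gtgt x) = Nat.iter (S c) gsrc x.
Proof.
  destruct HX as (_ & _ & Hglob).
  induction c as [|[|c] IHc]; intros x Hx H1 H2; [lia| |].
  - simpl. destruct (Hglob x Hx) as [E1 E2]; [lia|]. auto.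
  - destruct (IHc x Hx) as [E1 E2]; [lia|lia|].
    change (gtgt (Nat.iter (S c) gtgt (gsrc x)) = gtgt (Nat.iter (S (S c)) gtgt x) /\
            gsrc (Nat.iter (S c) gsrc (gtgt x)) = gsrc (Nat.iter (S (S c)) gsrc x)).
    rewrite E1, E2. auto.
Qed.

Lemma tgt_iter_src c : forall x : X, gin x -> 1 <= c -> S c <= gdim x ->
  gtgt (Nat.iter c gsrc x) = Nat.iter (S c) gtgt x /\
  gsrc (Nat.iter c gtgt x) = Nat.iter (S c) gsrc x.
Proof.
  destruct HX as (_ & _ & Hglob).
  induction c as [|c IHc]; intros x Hx H1 H2; [lia|].
  destruct (iter_boundary_in c x Hx) as (Hs & Hds & Ht & Hdt); [lia|].
  simpl. destruct (Hglob _ Hs) as [_ E1]; [lia|]. destruct (Hglob _ Ht) as [E2 _]; [lia|].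
  rewrite E1, <- E2.
  destruct c as [|c].
  - simpl. destruct (Hglob x Hx) as [F1 F2]; [lia|]. auto.
  - destruct (IHc x Hx) as [F1 F2]; [lia|lia|]. rewrite F1, F2. auto.
Qed.

Lemma wf_reta c : forall i (x : X), gin x -> gdim x = i + c -> wf i c (reta c x).
Proof.
  induction c; intros i x Hx Hd; simpl; [repeat split; auto; lia|].
  destruct (iter_boundary_in (S c) x Hx) as (Hs & Hds & Ht & Hdt); [lia|].
  simpl in Hs, Hds, Ht, Hdt. repeat split; auto; try lia.
  - apply IHc; auto; lia.
  - destruct c; simpl; auto.
    destruct (tgt_iter_src (S c) x Hx) as [E1 E2]; [lia|lia|]. simpl in E1, E2.
    repeat split; auto; repeat constructor; simpl; auto.
Qed.

Lemma inhom_reta c (x y : X) : gin x -> S c <= gdim x ->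
  Nat.iter (S c) gsrc x = y -> Nat.iter (S c) gtgt x = y -> inhom (reta c x) y y.
Proof.
  intros Hx Hd Hs Ht. destruct c; simpl in *; auto.
  destruct (tgt_iter_src (S c) x Hx) as [E1 E2]; [lia|lia|]. simpl in E1, E2.
  rewrite E1. repeat split; auto; repeat constructor; simpl; try rewrite E2; auto.
Qed.

Lemma rmap_gdim_reta c : forall i (x : X), gin x -> gdim x = i + c ->
  rmap (fun z => gdim z) (reta c x) = rnest (fun q => q) i c (Lf (i + c)).
Proof.
  induction c; intros i x Hx Hd; simpl; [rewrite Hd; reflexivity|].
  destruct (iter_boundary_in (S c) x Hx) as (_ & Hds & _ & Hdt); [lia|].
  simpl in Hds, Hdt. rewrite Hds, Hdt, (IHc (S i)) by (auto; lia).
  replace (gdim x - S c) with i by lia. rewrite Nat.add_succ_comm. reflexivity.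
Qed.

Lemma rsrc_rtgt_reta c : forall x : X, gin x -> S c <= gdim x ->
  rsrc (S c) (reta (S c) x) = reta c (gsrc x) /\ rtgt (S c) (reta (S c) x) = reta c (gtgt x).
Proof.
  induction c; intros x Hx Hd; [simpl; auto|].
  destruct (IHc x Hx) as [E1 E2]; [lia|].
  destruct (iter_tgt_src (S c) x Hx) as [F1 F2]; [lia|lia|].
  change (Nd (Nat.iter (S (S c)) gsrc x) [(rsrc (S c) (reta (S c) x), Nat.iter (S (S c)) gtgt x)]
            = Nd (Nat.iter (S c) gsrc (gsrc x)) [(reta c (gsrc x), Nat.iter (S c) gtgt (gsrc x))] /\
          Nd (Nat.iter (S (S c)) gsrc x) [(rtgt (S c) (reta (S c) x), Nat.iter (S (S c)) gtgt x)]
            = Nd (Nat.iter (S c) gsrc (gtgt x)) [(reta c (gtgt x), Nat.iter (S c) gtgt (gtgt x))]).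
  rewrite E1, E2, F1, F2, <- !Nat.iter_succ_r. auto.
Qed.

End Globular.

Lemma iter_pred_add c : forall i, Nat.iter c pred (i + c) = i.
Proof.
  induction c; intros; simpl; [lia|].
  rewrite Nat.add_succ_r, <- Nat.add_succ_l, IHc. reflexivity.
Qed.

(* A cell of T1 is determined by its shape: its labels are the dimensions of
   the nodes, so the unit cells are iterated singleton nodes. *)
Lemma reta_one n c : forall i,
  @reta (one n) c (i + c) = rnest (fun q => q) i c (Lf (i + c)).
Proof.
  induction c; intros; simpl; [reflexivity|].
  rewrite <- Nat.add_succ_comm, IHc, (iter_pred_add c (S i)). reflexivity.
Qed.

Section Beta.
Variable n : nat.

Lemma beta_nested p c : beta n (p + S c) p =
  (p + S c, rnest (fun q => q) 0 p
              (Nd p [(rnest (fun q => q) (S p) c (Lf (S p + c)), p);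
                     (rnest (fun q => q) (S p) c (Lf (S p + c)), p)])).
Proof.
  unfold beta. replace (Nat.eqb p (p + S c)) with false
    by (symmetry; apply Nat.eqb_neq; lia).
  unfold compT, etaT1, etaT. simpl.
  pose proof (reta_one n (p + S c) 0) as E. simpl in E. rewrite E.
  pose proof (rnest_add _ (fun q : nat => q) p (S c) 0 (Lf (p + S c))) as E2. simpl in E2.
  rewrite E2, rcomp_rnest. simpl. rewrite Nat.add_succ_r. reflexivity.
Qed.

Lemma beta_boundary_1 p :
  gsrc (beta n (p + 1) p) = etaT1 n p /\ gtgt (beta n (p + 1) p) = etaT1 n p.
Proof.
  rewrite beta_nested. unfold etaT1, etaT. simpl.
  pose proof (reta_one n p 0) as E. simpl in E. rewrite E.
  rewrite (rsrc_rnest _ _ p 0 1), (rtgt_rnest _ _ p 0 1) by lia.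
  rewrite Nat.add_1_r. split; reflexivity.
Qed.

Lemma beta_boundary_S p c :
  gsrc (beta n (p + S (S c)) p) = beta n (p + S c) p /\
  gtgt (beta n (p + S (S c)) p) = beta n (p + S c) p.
Proof.
  rewrite !beta_nested. unfold gsrc, gtgt, T1, T. cbn [fst snd].
  rewrite (rsrc_rnest _ _ p 0 (S (S c))), (rtgt_rnest _ _ p 0 (S (S c))) by lia.
  cbn [rsrc rtgt map]. rewrite rsrc_rnest_Lf, rtgt_rnest_Lf.
  replace (S p + c) with (p + S c) by lia.
  replace (S p + S c) with (S (p + S c)) by lia.
  replace (pred (p + S (S c))) with (p + S c) by lia. split; reflexivity.
Qed.

End Beta.

Section Operad.
Variables (n : nat) (K : gset) (k : K -> T1 n) (etaK : one n -> K)
  (muK : tensor n K k K -> K) (gamma : T1 n -> K -> K -> K) (sigma : T1 n -> K).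
Hypothesis Hop : is_operad n K k etaK muK.
Hypothesis Hc : is_contraction n K k gamma.
Hypothesis Hs : is_syscomp n K k etaK sigma.

Lemma K_gset : is_gset n K.
Proof. exact (proj1 Hop). Qed.

Lemma gdim_k (a : K) : gin a -> gdim a = fst (k a).
Proof.
  intros Ha. destruct Hop as (_ & Hk & _). destruct (Hk a Ha) as (_ & E & _).
  rewrite <- E. reflexivity.
Qed.

Lemma etaK_cell q : q <= n ->
  gin (etaK q) /\ gdim (etaK q) = q /\ k (etaK q) = (q, rnest (fun i => i) 0 q (Lf q)).
Proof.
  intros Hq. destruct Hop as (_ & _ & He & Hk & _).
  destruct (He q Hq) as (Hin & Hd & _). repeat split; auto.
  rewrite Hk by exact Hq. unfold etaT. simpl. exact (f_equal _ (reta_one n q 0)).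
Qed.

Lemma etaK_boundary q : S q <= n -> gsrc (etaK (S q)) = etaK q /\ gtgt (etaK (S q)) = etaK q.
Proof.
  intros Hq. destruct Hop as (_ & _ & He & _).
  destruct (He (S q) Hq) as (_ & _ & Hbd). destruct Hbd as [E1 E2]; simpl; [lia|]. auto.
Qed.

Lemma iter_boundary_etaK c : forall i, i + c <= n ->
  Nat.iter c gsrc (etaK (i + c)) = etaK i /\ Nat.iter c gtgt (etaK (i + c)) = etaK i.
Proof.
  induction c; intros i Hi; simpl; [rewrite Nat.add_0_r; auto|].
  rewrite <- Nat.add_succ_comm. destruct (IHc (S i)) as [E1 E2]; [lia|].
  rewrite E1, E2. apply etaK_boundary. lia.
Qed.

Lemma reta_etaK c : forall i, i + c <= n ->
  reta c (etaK (i + c)) = rnest etaK i c (Lf (etaK (i + c))).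
Proof.
  induction c; intros i Hi; [reflexivity|].
  change (Nd (Nat.iter (S c) gsrc (etaK (i + S c)))
            [(reta c (etaK (i + S c)), Nat.iter (S c) gtgt (etaK (i + S c)))]
          = rnest etaK i (S c) (Lf (etaK (i + S c)))).
  destruct (iter_boundary_etaK (S c) i Hi) as [E1 E2]. rewrite E1, E2.
  rewrite <- Nat.add_succ_comm, IHc by lia. reflexivity.
Qed.

Lemma muK_cell (ab : tensor n K k K) : gin ab ->
  gin (muK ab) /\ gdim (muK ab) = gdim ab /\ k (muK ab) = tensor_map n K k K k ab /\
  (0 < gdim ab -> muK (gsrc ab) = gsrc (muK ab) /\ muK (gtgt ab) = gtgt (muK ab)).
Proof.
  intros Hab. destruct Hop as (_ & _ & _ & _ & Hm & Hk & _).
  destruct (Hm ab Hab) as (A1 & A2 & A3). auto.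
Qed.

Lemma sigma_beta p c : p + S c <= n ->
  gin (sigma (beta n (p + S c) p)) /\ gdim (sigma (beta n (p + S c) p)) = p + S c /\
  k (sigma (beta n (p + S c) p)) = beta n (p + S c) p /\
  sigma (gsrc (beta n (p + S c) p)) = gsrc (sigma (beta n (p + S c) p)) /\
  sigma (gtgt (beta n (p + S c) p)) = gtgt (sigma (beta n (p + S c) p)).
Proof.
  intros Hn. destruct Hs as [Hsig _].
  assert (HS : inS n (beta n (p + S c) p)) by (exists (p + S c), p; repeat split; lia).
  destruct (Hsig _ HS) as (A1 & A2 & A3 & A4).
  assert (Hd : gdim (beta n (p + S c) p) = p + S c) by (rewrite beta_nested; reflexivity).
  rewrite Hd in A2, A4. destruct A4 as [A4 A5]; [lia|]. auto.
Qed.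

Definition over_unit (p c : nat) (x : K) : Prop :=
  gin x /\ gdim x = p + S c /\
  Nat.iter (S c) gsrc x = etaK p /\ Nat.iter (S c) gtgt x = etaK p.

Definition composable (p c : nat) (x y : K) : Prop :=
  p + S c <= n /\ over_unit p c x /\ over_unit p c y.

Definition comp_diagram (p c : nat) (x y : K) : T n K :=
  (p + S c, rnest etaK 0 p (Nd (etaK p) [(reta c x, etaK p); (reta c y, etaK p)])).

Definition kcomp (p c : nat) (x y : K) : K :=
  muK (sigma (beta n (p + S c) p), comp_diagram p c x y).

Lemma comp_diagram_cell p c x y : composable p c x y -> gin (comp_diagram p c x y).
Proof.
  intros (Hn & (Hx & Dx & Sx & Tx) & (Hy & Dy & Sy & Ty)).
  split; [simpl; lia|].
  apply (wf_rnest K etaK p 0 (S c)).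
  - intros q Hq. destruct (etaK_cell q) as (? & ? & _); [lia|]. auto.
  - intros q Hq. apply etaK_boundary. lia.
  - destruct (etaK_cell p) as (E1 & E2 & _); [lia|]. simpl.
    repeat split; auto; try (apply (wf_reta n K K_gset); auto; lia);
      apply (inhom_reta n K K_gset); auto; lia.
  - intros Hp. destruct p as [|p]; [lia|]. destruct (etaK_boundary p) as [E1 E2]; [lia|].
    simpl. rewrite E1, E2. repeat split; auto; repeat constructor; simpl; auto.
Qed.

Lemma shape_comp_diagram p c x y : composable p c x y ->
  Tmap n K (one n) (bang K) (comp_diagram p c x y) = beta n (p + S c) p.
Proof.
  intros (Hn & (Hx & Dx & _) & (Hy & Dy & _)).
  rewrite beta_nested. unfold Tmap, comp_diagram. cbn [fst snd].
  rewrite rmap_rnest, (rnest_ext _ (fun q => bang K (etaK q)) (fun q => q) p 0).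
  - unfold bang. simpl. destruct (etaK_cell p) as (_ & E & _); [lia|]. rewrite E.
    rewrite !(rmap_gdim_reta n K K_gset c (S p)) by (auto; lia). reflexivity.
  - intros q Hq. unfold bang. destruct (etaK_cell q) as (_ & E & _); [lia|]. exact E.
Qed.

Lemma comp_in_tensor p c x y : composable p c x y ->
  @gin (tensor n K k K) (sigma (beta n (p + S c) p), comp_diagram p c x y).
Proof.
  intros H. destruct (sigma_beta p c (proj1 H)) as (B1 & _ & B3 & _).
  split; [exact B1|]. split; [apply comp_diagram_cell; exact H|].
  simpl. rewrite B3, shape_comp_diagram; auto.
Qed.

Lemma kcomp_cell p c x y : composable p c x y ->
  gin (kcomp p c x y) /\ gdim (kcomp p c x y) = p + S c /\
  k (kcomp p c x y) = (p + S c, rcomp p (snd (k x)) (snd (k y))).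
Proof.
  intros H. destruct (muK_cell _ (comp_in_tensor p c x y H)) as (A1 & A2 & A3 & _).
  destruct (sigma_beta p c (proj1 H)) as (_ & B2 & _).
  unfold kcomp. repeat split; auto; [rewrite A2; exact B2|].
  rewrite A3. unfold tensor_map, muT, Tmap, comp_diagram. cbn [fst snd].
  rewrite rmap_rnest.
  pose proof (@rflat_rnest nat (fun q => k (etaK q)) p 0 (S c)) as RF. simpl in RF.
  rewrite RF. simpl. rewrite !rflat_rmap_reta. reflexivity.
Qed.

(* The 1-dimensional boundary of a composite along p is sigma of the unit,
   i.e. mu applied to the unit operation, which the left unit law removes. *)
Lemma kcomp_boundary_0 p x y : composable p 0 x y ->
  gsrc (kcomp p 0 x y) = etaK p /\ gtgt (kcomp p 0 x y) = etaK p.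
Proof.
  intros H. destruct (muK_cell _ (comp_in_tensor p 0 x y H)) as (_ & _ & _ & A4).
  destruct (sigma_beta p 0 (proj1 H)) as (_ & B2 & _ & B4 & B5).
  destruct A4 as [A4 A5]; [simpl; lia|].
  unfold kcomp. rewrite <- A4, <- A5. simpl gsrc; simpl gtgt.
  rewrite <- B4, <- B5. destruct (beta_boundary_1 n p) as [C1 C2]. rewrite C1, C2.
  destruct Hs as [_ Hunit]. rewrite Hunit by (destruct H; lia).
  unfold comp_diagram. cbn [fst snd].
  rewrite (rsrc_rnest _ etaK p 0 1), (rtgt_rnest _ etaK p 0 1) by lia. simpl.
  replace (pred (p + 1)) with p by lia.
  destruct Hop as (_ & _ & _ & _ & _ & _ & Hleft & _).
  destruct (etaK_cell p) as (E1 & E2 & _); [destruct H; lia|].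
  pose proof (Hleft (etaK p) E1) as L. unfold etaT in L. rewrite E2 in L.
  pose proof (reta_etaK p 0) as R. simpl in R. rewrite R in L by (destruct H; lia).
  split; exact L.
Qed.

Lemma composable_boundary p c x y : composable p (S c) x y ->
  composable p c (gsrc x) (gsrc y) /\ composable p c (gtgt x) (gtgt y).
Proof.
  assert (over_boundary : forall z, over_unit p (S c) z ->
            over_unit p c (gsrc z) /\ over_unit p c (gtgt z)).
  { intros z (Hz & Dz & Sz & Tz).
    destruct (iter_boundary_in n K K_gset 1 z Hz) as (Z1 & Z2 & Z3 & Z4); [lia|].
    simpl in Z1, Z2, Z3, Z4.
    destruct (iter_tgt_src n K K_gset (S c) z Hz) as [G1 G2]; [lia|lia|].
    unfold over_unit. rewrite <- !Nat.iter_succ_r, G1, G2. repeat split; auto; lia. }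
  intros (Hn & Hx & Hy).
  destruct (over_boundary x Hx), (over_boundary y Hy).
  split; (split; [lia | split; assumption]).
Qed.

Lemma kcomp_boundary_S p c x y : composable p (S c) x y ->
  gsrc (kcomp p (S c) x y) = kcomp p c (gsrc x) (gsrc y) /\
  gtgt (kcomp p (S c) x y) = kcomp p c (gtgt x) (gtgt y).
Proof.
  intros H. destruct (muK_cell _ (comp_in_tensor p (S c) x y H)) as (_ & _ & _ & A4).
  destruct H as (Hn & (Hx & Dx & _) & (Hy & Dy & _)).
  destruct (sigma_beta p (S c) Hn) as (_ & B2 & _ & B4 & B5).
  destruct A4 as [A4 A5]; [simpl; lia|].
  unfold kcomp. rewrite <- A4, <- A5. cbn [gsrc gtgt tensor Defs.T fst snd].
  rewrite <- B4, <- B5. destruct (beta_boundary_S n p c) as [C1 C2]. rewrite C1, C2.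
  unfold comp_diagram. cbn [fst snd].
  rewrite (rsrc_rnest _ etaK p 0 (S (S c))), (rtgt_rnest _ etaK p 0 (S (S c))) by lia.
  cbn [rsrc rtgt map].
  destruct (rsrc_rtgt_reta n K K_gset c x Hx) as [R1 R2]; [lia|].
  destruct (rsrc_rtgt_reta n K K_gset c y Hy) as [R3 R4]; [lia|].
  rewrite R1, R2, R3, R4.
  replace (pred (p + S (S c))) with (p + S c) by lia. split; reflexivity.
Qed.

Lemma iter_boundary_kcomp p c : forall x y, composable p c x y ->
  Nat.iter (S c) gsrc (kcomp p c x y) = etaK p /\
  Nat.iter (S c) gtgt (kcomp p c x y) = etaK p.
Proof.
  induction c; intros x y H.
  - apply kcomp_boundary_0 in H. simpl. destruct H as [-> ->]. auto.
  - destruct (composable_boundary p c x y H) as [H1 H2].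
    destruct (kcomp_boundary_S p c x y H) as [E1 E2].
    split; rewrite Nat.iter_succ_r; [rewrite E1 | rewrite E2]; apply IHc; auto.
Qed.

Definition id_shape (j m : nat) : rt nat :=
  match m with 0 => Lf j | S _ => Nd j [] end.

Fixpoint idcell (j m : nat) : K :=
  match m with
  | 0 => etaK j
  | S m' => gamma (j + m', rnest (fun q => q) 0 j (id_shape j m')) (idcell j m') (idcell j m')
  end.

Lemma idcell_spec m : forall j, j + m <= n ->
  gin (idcell j m) /\ gdim (idcell j m) = j + m /\
  k (idcell j m) = (j + m, rnest (fun q => q) 0 j (id_shape j m)) /\
  Nat.iter m gsrc (idcell j m) = etaK j /\ Nat.iter m gtgt (idcell j m) = etaK j /\
  (0 < m -> gsrc (idcell j m) = idcell j (pred m) /\ gtgt (idcell j m) = idcell j (pred m)).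
Proof.
  induction m as [|m IHm]; intros j Hj.
  { destruct (etaK_cell j) as (E1 & E2 & E3); [lia|]. simpl.
    rewrite Nat.add_0_r. repeat split; auto; lia. }
  destruct (IHm j) as (A1 & A2 & A3 & A4 & A5 & _); [lia|].
  set (alpha := ((j + m, rnest (fun q => q) 0 j (id_shape j m)) : T1 n)).
  assert (Halpha : gin alpha).
  { split; [simpl; lia|]. simpl.
    apply (wf_rnest (one n) (fun q => q) j 0 m); simpl.
    - intros q Hq. lia.
    - auto.
    - destruct m; simpl; lia.
    - intros _. destruct m; simpl; auto. }
  assert (Hid : idT n (one n) alpha = (j + S m, rnest (fun q => q) 0 j (id_shape j (S m)))).
  { unfold idT, alpha. cbn [fst snd]. rewrite rid_rnest, <- Nat.add_succ_r.
    destruct m; reflexivity. }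
  assert (Hbd : gsrc (idT n (one n) alpha) = alpha /\ gtgt (idT n (one n) alpha) = alpha).
  { rewrite Hid. cbn [gsrc gtgt T1 Defs.T fst snd].
    rewrite (rsrc_rnest _ _ j 0 (S m)), (rtgt_rnest _ _ j 0 (S m)) by lia.
    replace (pred (j + S m)) with (j + m) by lia. destruct m; split; reflexivity. }
  destruct Hbd as [Hsrc Htgt].
  destruct ((proj1 Hc) alpha Halpha) with (a := idcell j m) (b := idcell j m)
    as (G1 & G2 & G3 & G4); auto; try (simpl; lia);
    [rewrite A3, Hsrc; reflexivity | rewrite A3, Htgt; reflexivity |].
  change (idcell j (S m)) with (gamma alpha (idcell j m) (idcell j m)).
  rewrite G2, Hid. repeat split; auto.
  - rewrite gdim_k, G2, Hid by exact G1. reflexivity.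
  - rewrite Nat.iter_succ_r, G3. exact A4.
  - rewrite Nat.iter_succ_r, G4. exact A5.
Qed.

(* The section khat, by recursion on the pasting diagram: a node at offset j
   with a single child is that child (all j-cells of T1 being eta_j), and a
   node with several children is the composite along j of its first child
   with the rest. *)
Fixpoint lift (j m : nat) (r : rt nat) {struct r} : K :=
  match r with
  | Lf _ => etaK j
  | Nd _ l =>
      (fix lift_list (l : list (rt nat * nat)) : K :=
         match l with
         | [] => idcell j m
         | (d, _) :: l' =>
             match l' with
             | [] => lift (S j) (pred m) d
             | _ :: _ => kcomp j (pred m) (lift (S j) (pred m) d) (lift_list l')
             end
         end) l
  end.

Lemma lift_Nd_single j m a d x : lift j (S m) (Nd a [(d, x)]) = lift (S j) m d.
Proof. reflexivity. Qed.

Lemma lift_Nd_cons j m a d x e l :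
  lift j (S m) (Nd a ((d, x) :: e :: l)) =
  kcomp j m (lift (S j) m d) (lift j (S m) (Nd a (e :: l))).
Proof. destruct e. reflexivity. Qed.

Definition lift_spec (j m : nat) (r : rt nat) (x : K) : Prop :=
  gin x /\ gdim x = j + m /\ k x = (j + m, rnest (fun q => q) 0 j r) /\
  Nat.iter m gsrc x = etaK j /\ Nat.iter m gtgt x = etaK j.

Definition lifts (r : rt nat) : Prop :=
  forall j m, @wf (one n) j m r -> j + m <= n ->
  lift_spec j m r (lift j m r) /\
  (0 < m -> gsrc (lift j m r) = lift j (pred m) (rsrc m r) /\
            gtgt (lift j m r) = lift j (pred m) (rtgt m r)).

Lemma over_unit_lift_spec j m r x : lift_spec j (S m) r x -> over_unit j m x.
Proof. intros (Hx & Dx & _ & Sx & Tx). repeat split; auto. Qed.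

Lemma over_unit_lift_spec_child j m d x : j + S m <= n ->
  lift_spec (S j) m d x -> over_unit j m x.
Proof.
  intros Hn (Hx & Dx & _ & Sx & Tx). destruct (etaK_boundary j) as [E1 E2]; [lia|].
  repeat split; auto; [lia | rewrite Nat.iter_succ, Sx | rewrite Nat.iter_succ, Tx]; auto.
Qed.

Lemma lifts_Lf a : lifts (Lf a).
Proof.
  intros j m (-> & _ & Ha) Hn. simpl in Ha. subst a.
  destruct (etaK_cell j) as (E1 & E2 & E3); [lia|].
  split; [|lia]. unfold lift_spec. cbn [lift]. rewrite Nat.add_0_r. repeat split; auto.
Qed.

Lemma lifts_Nd_nil a : lifts (Nd a []).
Proof.
  intros j [|m] Hwf Hn; [contradiction|]. destruct Hwf as (_ & Ha & _). simpl in Ha. subst a.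
  destruct (idcell_spec (S m) j Hn) as (A1 & A2 & A3 & A4 & A5 & A6).
  split; [repeat split; auto|].
  intros _. destruct (A6 ltac:(lia)) as [B1 B2]. cbn [lift].
  rewrite B1, B2. destruct m; split; reflexivity.
Qed.

Lemma lifts_Nd_single a d x : lifts d -> lifts (Nd a [(d, x)]).
Proof.
  intros Hd j [|m] Hwf Hn; [contradiction|].
  destruct Hwf as (_ & Ha & _ & Hx & Hwd & _). simpl in Ha, Hx. subst a x.
  destruct (Hd (S j) m Hwd ltac:(lia)) as [Hspec Hbd].
  pose proof (over_unit_lift_spec_child j m d _ Hn Hspec) as (_ & _ & Sx & Tx).
  destruct Hspec as (X1 & X2 & X3 & X4 & X5).
  rewrite lift_Nd_single. split.
  { repeat split; auto; [lia|]. rewrite X3, rnest_S. f_equal. lia. }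
  intros _. destruct m as [|m].
  - simpl in Sx, Tx. rewrite Sx, Tx. split; reflexivity.
  - apply Hbd. lia.
Qed.

Lemma lifts_Nd_cons a d x e l :
  lifts d -> lifts (Nd a (e :: l)) -> lifts (Nd a ((d, x) :: e :: l)).
Proof.
  intros Hd Hl j [|m] Hwf Hn; [contradiction|].
  destruct Hwf as (Ha & Haj & Hx & Hxj & Hwd & _ & Hrest). simpl in Haj, Hxj. subst a x.
  destruct (Hd (S j) m Hwd ltac:(lia)) as [HspecX HbdX].
  destruct (Hl j (S m) (conj Ha (conj eq_refl Hrest)) Hn) as [HspecY HbdY].
  set (y := lift j (S m) (Nd j (e :: l))) in *.
  assert (Hxy : composable j m (lift (S j) m d) y).
  { split; [lia | split]; [eapply over_unit_lift_spec_child | eapply over_unit_lift_spec];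
      eauto. }
  destruct (kcomp_cell j m _ _ Hxy) as (C1 & C2 & C3).
  destruct (iter_boundary_kcomp j m _ _ Hxy) as [C4 C5].
  rewrite lift_Nd_cons. fold y. split.
  { repeat split; auto. rewrite C3, (proj1 (proj2 (proj2 HspecX))),
      (proj1 (proj2 (proj2 HspecY))).
    cbn [snd]. rewrite rnest_S, rcomp_rnest. reflexivity. }
  intros _. destruct m as [|m].
  - destruct (kcomp_boundary_0 _ _ _ Hxy) as [B1 B2]. rewrite B1, B2. split; reflexivity.
  - destruct (kcomp_boundary_S _ _ _ _ Hxy) as [B1 B2]. rewrite B1, B2.
    destruct (HbdX ltac:(lia)) as [-> ->], (HbdY ltac:(lia)) as [-> ->].
    destruct e. split; reflexivity.
Qed.

Lemma lifts_all : forall r, lifts r.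
Proof.
  apply rt_ind_deep; [exact lifts_Lf|].
  intros a l Hl. induction Hl as [|[d x] l Hd Hl IHl]; [apply lifts_Nd_nil|].
  destruct l as [|e l]; [apply lifts_Nd_single | apply lifts_Nd_cons]; assumption.
Qed.

Definition khat (pi : T1 n) : K := lift 0 (fst pi) (snd pi).

Lemma khat_spec (pi : T1 n) : gin pi -> lift_spec 0 (fst pi) (snd pi) (khat pi) /\
  (0 < gdim pi -> khat (gsrc pi) = gsrc (khat pi) /\ khat (gtgt pi) = gtgt (khat pi)).
Proof.
  destruct pi as [m r]. intros [Hm Hwf].
  destruct (lifts_all r 0 m Hwf Hm) as [Hspec Hbd]. split; [exact Hspec|].
  intros Hpos. destruct (Hbd Hpos) as [E1 E2]. unfold khat. simpl. auto.
Qed.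

Lemma khat_gmap : is_gmap (T1 n) K khat.
Proof.
  intros pi Hpi. destruct (khat_spec pi Hpi) as [(H1 & H2 & _) Hbd]. auto.
Qed.

Lemma k_khat (pi : T1 n) : gin pi -> k (khat pi) = pi.
Proof.
  intros Hpi. destruct (khat_spec pi Hpi) as [(_ & _ & Hk & _) _].
  rewrite Hk. destruct pi. reflexivity.
Qed.

End Operad.

Theorem mainTheorem6 (n : nat) (K : gset) (k : K -> T1 n)
  (etaK : one n -> K) (muK : tensor n K k K -> K)
  (gamma : T1 n -> K -> K -> K) (sigma : T1 n -> K) :
  is_operad n K k etaK muK ->
  is_contraction n K k gamma ->
  is_syscomp n K k etaK sigma ->
  exists khat : T1 n -> K,
    is_gmap (T1 n) K khat /\
    (forall pi : T1 n, gin pi -> k (khat pi) = pi) /\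
    (forall m, m <= n -> forall pi : T1 n, gin pi -> gdim pi = m ->
       exists a : K, gin a /\ gdim a = m /\ k a = pi).
Proof.
  intros Hop Hc Hs.
  pose proof (khat_gmap n K k etaK muK gamma sigma Hop Hc Hs) as Hmap.
  pose proof (k_khat n K k etaK muK gamma sigma Hop Hc Hs) as Hsec.
  exists (khat n K k etaK muK gamma sigma). split; [exact Hmap|]. split; [exact Hsec|].
  intros m _ pi Hpi Hd. exists (khat n K k etaK muK gamma sigma pi).
  destruct (Hmap pi Hpi) as (Hin & Hdim & _). rewrite Hdim. auto.
Qed.
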